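(* Let $h(s)$ be a real rational (not necessarily proper) transfer function, and define $(F_N)_{N\in\mathbb{N}}$ recursively by \[ F_{N+1}(s)=\frac{F_N(s)+h(s)}{F_N(s)+h(s)+1},\qquad F_0(s)=0. \] For $z$ in the extended complex plane $\hat{\mathbb{C}}=\mathbb{C}\cup\{\infty\}$ define \[ f(z):=\min_{a>0,\ \omega\in\mathbb{R}\cup\{\infty\}} a\quad\text{subject to}\quad z=\frac{-a^2\omega^2}{-(1-a)\omega^2+2j\omega+1}, \] where $j=\sqrt{-1}$. Then for any $s\in\hat{\mathbb{C}}$ with $h(s)\notin(-4,0)$, \[ \sup_{N\in\mathbb{N}}|F_N(s)|\le f(h(s)). \]
   Context: $(-4,0)$ denotes the open real interval between $-4$ and $0$, viewed as a subset of $\mathbb{C}$. In the constraint defining $f$, the value at $\omega=\infty$ is understood as the limit of the right-hand side as $\omega\to\infty$, and the right-hand side is the value at $s=j\omega$ of $a^2s^2/((1-a)s^2+2s+1)$. *)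

From HB Require Import structures.
From mathcomp Require Import all_boot all_order all_algebra.
From mathcomp Require Import complex.
Set Implicit Arguments. Unset Strict Implicit. Unset Printing Implicit Defensive.
Import Order.TTheory GRing.Theory Num.Theory.
Local Open Scope ring_scope.

(* The extended complex plane  C^ = C u {oo}: [Some z] is z, [None] is oo. *)
Definition extC (R : rcfType) := option R[i].

(* A rational function over C, given in homogeneous form (n, d), i.e. n/d,
   with (n, d) <> (0, 0).  (d = 0 encodes the constant function oo.)  Its
   value at a point of C^ is computed from the reduced form n'/d' obtained by
   dividing out g = gcd(n, d):
   - at a finite point x: n'(x)/d'(x) if d'(x) <> 0, and oo otherwise;
   - at oo: 0 if deg n' < deg d', lead(n')/lead(d') if the degrees agree,
     and oo if deg n' > deg d'. *)
Definition rat_eval (R : rcfType) (nd : {poly R[i]} * {poly R[i]})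
    (s : extC R) : extC R :=
  let g := gcdp nd.1 nd.2 in
  let n := nd.1 %/ g in
  let d := nd.2 %/ g in
  match s with
  | Some x => if d.[x] != 0 then Some (n.[x] / d.[x]) else None
  | None =>
      if (size n < size d)%N then Some 0
      else if size n == size d then Some (lead_coef n / lead_coef d)
      else None
  end.

Definition cpoly (R : rcfType) (p : {poly R}) : {poly R[i]} :=
  map_poly (real_complex R) p.

(* The sequence F_N for h = p/q (p, q real polynomials, q <> 0):
   F_0 = 0, F_{N+1} = (F_N + h)/(F_N + h + 1), computed in homogeneous form:
   if F_N = n/d then F_N + h = (n q + p d)/(d q) and
   F_{N+1} = (n q + p d) / (n q + p d + d q). *)
Fixpoint Fseq (R : rcfType) (p q : {poly R}) (N : nat)
    : {poly R[i]} * {poly R[i]} :=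
  match N with
  | O => (0, 1)
  | N'.+1 =>
      let nd := Fseq p q N' in
      let A := nd.1 * cpoly q + cpoly p * nd.2 in
      (A, A + nd.2 * cpoly q)
  end.

(* The right-hand side of the constraint in the definition of f:
   the value at s = j*omega of a^2 s^2 / ((1-a) s^2 + 2 s + 1), where for
   omega = oo the value is the limit as omega -> oo (= value of this rational
   function at s = oo). *)
Definition fcurve (R : rcfType) (a : R) (omega : option R) : extC R :=
  rat_eval (((a ^+ 2)%:C)%C *: 'X^2,
            ((1 - a)%:C)%C *: 'X^2 + 2%:R *: 'X + 1)
           (match omega with Some w => Some ((w%:C)%C * 'i%C) | None => None end).

Definition f_feasible (R : rcfType) (z : extC R) (a : R) : Prop :=
  0 < a /\ exists omega : option R, z = fcurve a omega.

(* |w| <= a for w in C^ (|oo| = +oo is never <= a real number). *)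
Definition extC_norm_le (R : rcfType) (w : extC R) (a : R) : Prop :=
  match w with
  | Some x => ComplexField.Normc.normc x <= a
  | None => False
  end.

Definition in_m4_0 (R : rcfType) (w : extC R) : Prop :=
  exists r : R, -4 < r < 0 /\ w = Some ((r%:C)%C).

From HB Require Import structures.
From mathcomp Require Import all_boot all_order all_algebra.
From mathcomp Require Import complex.
From mathcomp Require Import ring lra zify.
Set Implicit Arguments. Unset Strict Implicit. Unset Printing Implicit Defensive.
Import Order.TTheory GRing.Theory Num.Theory.
Local Open Scope ring_scope.

(* Write h(s) = pi/ka and F_N in homogeneous coordinates.  Evaluation at s
   commutes with the recursion (after cancelling the gcd at a finite point, and
   by comparing top coefficients at infinity), so it suffices to iterate
   F |-> (F + z)/(F + z + 1) from F = 0 at the single point z = h(s).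
   If a is feasible for z, then z = 0, or z = oo and a = 1, or
   z = a^2 / D with D = (1 + j v)^2 - a for a real v.  In the last case the
   closed disk with diameter a through 0 in the direction of conj (1 + j v) is
   invariant: for the Hermitian form J defining it, the step (n, d) |-> (n', d')
   satisfies |D|^2 J(n', d') = |ka|^2 (|D|^2 J(n, d) - (a nonnegative term)).
   Hence every F_N lies in that disk and |F_N| <= a. *)

Section PairIteration.
Variable T : comNzRingType.

Definition fstep (pi ka : T) (nd : T * T) : T * T :=
  let A := nd.1 * ka + pi * nd.2 in (A, A + nd.2 * ka).

Definition fpair (pi ka : T) (N : nat) : T * T := iter N (fstep pi ka) (0, 1).

Lemma fpair_mulr (pi ka g : T) N :
  fpair (pi * g) (ka * g) N = (g ^+ N * (fpair pi ka N).1, g ^+ N * (fpair pi ka N).2).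
Proof.
elim: N => [|N /= ->]; first by rewrite /= !mul1r.
by rewrite /fstep /= exprS; congr pair; ring.
Qed.

Lemma fpair0l (ka : T) N : fpair 0 ka N = (0, ka ^+ N).
Proof. by elim: N => [|N /= ->] //; rewrite /fstep /= !mul0r !add0r exprSr. Qed.

Lemma fpair0r (pi : T) N : fpair pi 0 N.+1 = (pi ^+ N.+1, pi ^+ N.+1).
Proof.
elim: N => [|N /= ->]; first by rewrite /= /fstep /= !mulr0 !add0r addr0 mulr1.
by rewrite /fstep /= !mulr0 !add0r !addr0 -exprS.
Qed.

End PairIteration.

Lemma fpair_rmorph (T S : comNzRingType) (f : {rmorphism T -> S}) (pi ka : T) N :
  (f (fpair pi ka N).1, f (fpair pi ka N).2) = fpair (f pi) (f ka) N.
Proof.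
elim: N => [|N /= <-]; first by rewrite /= rmorph0 rmorph1.
by rewrite /= !rmorphD !rmorphM.
Qed.

Lemma fpair_neq0 (D : idomainType) (pi ka : D) N : (pi != 0) || (ka != 0) ->
  ((fpair pi ka N).1 != 0) || ((fpair pi ka N).2 != 0).
Proof.
have [-> /=|ka0 _] := eqVneq ka 0.
  rewrite orbF => pi0.
  by case: N => [|N]; rewrite ?fpair0r /= ?oner_eq0 ?orbT ?expf_neq0.
(* For ka != 0 the step is linear and invertible, of determinant ka^2. *)
elim: N => [|N]; first by rewrite oner_eq0 orbT.
rewrite /= /fstep; case: (fpair pi ka N) => n d /=; apply: contraTT.
rewrite !negb_or !negbK => /andP [/eqP A0]; rewrite A0 add0r mulf_eq0 (negbTE ka0) orbF.
move=> /eqP d0; rewrite d0 eqxx andbT.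
by move/eqP: A0; rewrite d0 mulr0 addr0 mulf_eq0 (negbTE ka0) orbF.
Qed.

Section TopCoefficient.
Variable T : nzRingType.

Lemma coefM_top (p q : {poly T}) i j : (size p <= i.+1)%N -> (size q <= j.+1)%N ->
  (p * q)`_(i + j) = p`_i * q`_j.
Proof.
move=> hp hq; rewrite coefM.
have hi : (i < (i + j).+1)%N by rewrite ltnS leq_addr.
rewrite (bigD1 (Ordinal hi)) //= addKn big1 ?addr0 // => k /eqP/val_eqP/= ki.
have [ik|ki'] := ltnP i k; first by rewrite nth_default ?mul0r // (leq_trans hp ik).
have kl : (k < i)%N by rewrite ltn_neqAle ki ki'.
by rewrite [q`__]nth_default ?mulr0 // (leq_trans hq) // ltn_subRL -addSn leq_add2r.
Qed.

End TopCoefficient.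

Lemma fpair_coef_top (T : comNzRingType) (p q : {poly T}) K N :
  (size p <= K.+1)%N -> (size q <= K.+1)%N ->
  [/\ (size (fpair p q N).1 <= (N * K).+1)%N, (size (fpair p q N).2 <= (N * K).+1)%N &
      ((fpair p q N).1`_(N * K), (fpair p q N).2`_(N * K)) = fpair p`_K q`_K N].
Proof.
move=> hp hq; elim: N => [|N [hn hd IH]]; first by rewrite size_poly0 size_poly1 coef0 coef1.
have sizeM (u w : {poly T}) : (size u <= (N * K).+1)%N -> (size w <= K.+1)%N ->
    (size (u * w)%R <= (N.+1 * K).+1)%N.
  move=> hu hw; apply: leq_trans (size_polyMleq _ _) _.
  by rewrite mulSnr; lia.
have hA : (size ((fpair p q N).1 * q + p * (fpair p q N).2)%R <= (N.+1 * K).+1)%N.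
  by rewrite (leq_trans (size_polyD _ _)) // geq_max (sizeM _ _ hn hq) mulrC sizeM.
split; first exact: hA.
  by rewrite (leq_trans (size_polyD _ _)) // geq_max hA sizeM.
rewrite /= -IH /fstep /= !coefD mulSnr [p * _]mulrC !coefM_top //.
by rewrite [_ * p`_K]mulrC.
Qed.

Section RationalEvaluation.
Variable R : rcfType.
Local Notation C := R[i].

(* [ratio 0 0] is the junk value None. *)
Definition ratio (al be : C) : extC R := if be != 0 then Some (al / be) else None.

Lemma ratio_cross (al be al' be' : C) : al * be' = be * al' ->
  (al != 0) || (be != 0) -> (al' != 0) || (be' != 0) -> ratio al be = ratio al' be'.
Proof.
rewrite /ratio => e nz nz'.
have [be0|be0] := eqVneq be 0.
  move: e nz; rewrite be0 mul0r eqxx orbF => /eqP; rewrite mulf_eq0.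
  by case/orP=> /eqP->; rewrite eqxx.
have [be'0|be'0] := eqVneq be' 0.
  by move: e nz'; rewrite be'0 mulr0 eqxx orbF => /esym/eqP; rewrite mulf_eq0 (negbTE be0) => /= ->.
by congr Some; apply/eqP; rewrite eqr_div // e mulrC.
Qed.

Lemma divp_gcd_neq0 (n d : {poly C}) x : (n != 0) || (d != 0) ->
  ((n %/ gcdp n d).[x] != 0) || ((d %/ gcdp n d).[x] != 0).
Proof.
move/coprimep_div_gcd => cop.
have [nx0|//] := eqVneq (n %/ gcdp n d).[x] 0.
by rewrite (coprimep_root cop) ?orbT //; apply/eqP.
Qed.

Lemma rat_eval_someE (n d : {poly C}) x :
  rat_eval (n, d) (Some x) = ratio (n %/ gcdp n d).[x] (d %/ gcdp n d).[x].
Proof. by []. Qed.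

Lemma rat_eval_some_horner (n d : {poly C}) x : (n.[x] != 0) || (d.[x] != 0) ->
  rat_eval (n, d) (Some x) = ratio n.[x] d.[x].
Proof.
move=> nzx; have nz : (n != 0) || (d != 0).
  by case/orP: nzx => h; apply/orP; [left|right]; apply: contraNneq h => ->; rewrite horner0.
rewrite rat_eval_someE; apply: ratio_cross (divp_gcd_neq0 x nz) nzx.
have hn := divpK (dvdp_gcdl n d); have hd := divpK (dvdp_gcdr n d).
set g := gcdp n d in hn hd *; set n' := n %/ g in hn *; set d' := d %/ g in hd *.
by rewrite -hn -hd !hornerM; ring.
Qed.

Lemma rat_eval_some_cross (n d n1 d1 : {poly C}) x : n * d1 = d * n1 ->
  (n != 0) || (d != 0) -> (n1 != 0) || (d1 != 0) ->
  rat_eval (n, d) (Some x) = rat_eval (n1, d1) (Some x).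
Proof.
move=> e nz nz1; rewrite !rat_eval_someE.
apply: ratio_cross (divp_gcd_neq0 x nz) (divp_gcd_neq0 x nz1).
have hn := divpK (dvdp_gcdl n d); have hd := divpK (dvdp_gcdr n d).
have hn1 := divpK (dvdp_gcdl n1 d1); have hd1 := divpK (dvdp_gcdr n1 d1).
set g := gcdp n d in hn hd *; set g1 := gcdp n1 d1 in hn1 hd1 *.
set n' := n %/ g in hn *; set d' := d %/ g in hd *.
set n1' := n1 %/ g1 in hn1 *; set d1' := d1 %/ g1 in hd1 *.
have gg1 : g * g1 != 0 by rewrite mulf_neq0 // gcdp_eq0 negb_and.
have e' : n' * d1' = d' * n1'.
  by apply: (mulIf gg1); rewrite mulrACA hn hd1 mulrACA hd hn1.
by rewrite -!hornerM e'.
Qed.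

Lemma coef_neq0_size (p : {poly C}) K : (size p <= K.+1)%N ->
  (p`_K != 0) = (size p == K.+1).
Proof.
move=> hp; have [sp|sp] := eqVneq (size p) K.+1.
  have -> : K = (size p).-1 by rewrite sp.
  by rewrite -lead_coefE lead_coef_eq0 -size_poly_gt0 sp.
by rewrite nth_default ?eqxx // -ltnS ltn_neqAle sp.
Qed.

Definition ratio_infty (u w : {poly C}) : extC R :=
  if (size u < size w)%N then Some 0
  else if size u == size w then Some (lead_coef u / lead_coef w) else None.

Lemma rat_eval_noneE (n d : {poly C}) :
  rat_eval (n, d) None = ratio_infty (n %/ gcdp n d) (d %/ gcdp n d).
Proof. by []. Qed.

Lemma ratio_infty_coef (u w : {poly C}) K : (size u <= K.+1)%N -> (size w <= K.+1)%N ->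
  (u`_K != 0) || (w`_K != 0) -> ratio_infty u w = ratio u`_K w`_K.
Proof.
move=> hu hw; rewrite /ratio_infty /ratio !coef_neq0_size //.
have [su|su] := eqVneq (size u) K.+1; have [sw|sw] := eqVneq (size w) K.+1 => //= _.
- by rewrite su sw ltnn eqxx !lead_coefE su sw.
- by rewrite su ltnNge (leq_trans hw) //= eq_sym (negbTE sw).
- have hu' : (size u <= K)%N by rewrite -ltnS ltn_neqAle su.
  by rewrite sw ltnS hu' nth_default ?mul0r.
Qed.

Lemma rat_eval_none_coef (n d : {poly C}) K : (size n <= K.+1)%N -> (size d <= K.+1)%N ->
  (n`_K != 0) || (d`_K != 0) -> rat_eval (n, d) None = ratio n`_K d`_K.
Proof.
move=> hn hd nzK; have nz : (n != 0) || (d != 0).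
  by case/orP: nzK => h; apply/orP; [left|right]; apply: contraNneq h => ->; rewrite coef0.
have en := divpK (dvdp_gcdl n d); have ed := divpK (dvdp_gcdr n d).
rewrite rat_eval_noneE.
set g := gcdp n d in en ed *; set n' := n %/ g in en *; set d' := d %/ g in ed *.
have g0 : g != 0 by rewrite gcdp_eq0 negb_and.
set m := (size g).-1; set K' := (K - m)%N.
have sg : size g = m.+1 by rewrite prednK // size_poly_gt0.
have mK : (m <= K)%N.
  rewrite -ltnS -sg; case/orP: nz => [/(leq_gcdpl d)|/(leq_gcdpr n)] sg_le.
    exact: leq_trans sg_le hn.
  exact: leq_trans sg_le hd.
have KK : K = (K' + m)%N by rewrite subnK.
have size_div (u : {poly C}) : (size (u * g)%R <= K.+1)%N -> (size u <= K'.+1)%N.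
  have [->|u0] := eqVneq u 0; first by rewrite size_poly0.
  by rewrite size_mul // sg addnS /= {1}KK -addSn leq_add2r.
have hn' : (size n' <= K'.+1)%N by apply: size_div; rewrite en.
have hd' : (size d' <= K'.+1)%N by apply: size_div; rewrite ed.
have cn : n`_K = n'`_K' * g`_m by rewrite -en KK coefM_top // sg.
have cd : d`_K = d'`_K' * g`_m by rewrite -ed KK coefM_top // sg.
have lg : g`_m != 0 by rewrite -lead_coefE lead_coef_eq0.
have nz' : (n'`_K' != 0) || (d'`_K' != 0).
  by move: nzK; rewrite cn cd !mulf_eq0 (negbTE lg) !orbF.
rewrite (ratio_infty_coef hn' hd' nz'); apply: ratio_cross nz' nzK.
by rewrite cn cd; ring.
Qed.

Lemma rat_eval_fpair_some (P Q : {poly C}) x : (P != 0) || (Q != 0) ->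
  exists pi ka : C, [/\ (pi != 0) || (ka != 0), rat_eval (P, Q) (Some x) = ratio pi ka &
    forall N, rat_eval (fpair P Q N) (Some x) = ratio (fpair pi ka N).1 (fpair pi ka N).2].
Proof.
move=> nz; have eP := divpK (dvdp_gcdl P Q); have eQ := divpK (dvdp_gcdr P Q).
set g := gcdp P Q in eP eQ; set P' := P %/ g in eP *; set Q' := Q %/ g in eQ *.
have nzx : (P'.[x] != 0) || (Q'.[x] != 0) by exact: divp_gcd_neq0.
exists P'.[x], Q'.[x]; split=> // N.
have nz' : (P' != 0) || (Q' != 0).
  by case/orP: nzx => h; apply/orP; [left|right]; apply: contraNneq h => ->; rewrite horner0.
have := fpair_rmorph (horner_eval x) P' Q' N; rewrite /= !horner_evalE => evN.
have nzNx : ((fpair P' Q' N).1.[x] != 0) || ((fpair P' Q' N).2.[x] != 0).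
  by move: (fpair_neq0 N nzx); rewrite -evN.
rewrite -evN -rat_eval_some_horner //.
apply: rat_eval_some_cross; rewrite ?fpair_neq0 //.
by rewrite -eP -eQ fpair_mulr /=; ring.
Qed.

Lemma rat_eval_fpair_none (P Q : {poly C}) : (P != 0) || (Q != 0) ->
  exists pi ka : C, [/\ (pi != 0) || (ka != 0), rat_eval (P, Q) None = ratio pi ka &
    forall N, rat_eval (fpair P Q N) None = ratio (fpair pi ka N).1 (fpair pi ka N).2].
Proof.
move=> nz; set K := (maxn (size P) (size Q)).-1.
have sK : maxn (size P) (size Q) = K.+1.
  by rewrite prednK // leq_max !size_poly_gt0.
have hP : (size P <= K.+1)%N by rewrite -sK leq_maxl.
have hQ : (size Q <= K.+1)%N by rewrite -sK leq_maxr.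
have nzK : (P`_K != 0) || (Q`_K != 0).
  by rewrite !coef_neq0_size // -sK; case: leqP; rewrite eqxx ?orbT.
exists P`_K, Q`_K; split=> [||N]; rewrite ?(rat_eval_none_coef hP hQ) //.
have [hN1 hN2 top] := fpair_coef_top N hP hQ.
have nzN : ((fpair P Q N).1`_(N * K) != 0) || ((fpair P Q N).2`_(N * K) != 0).
  by move: (fpair_neq0 N nzK); rewrite -top.
by rewrite [fpair P Q N]surjective_pairing (rat_eval_none_coef hN1 hN2 nzN) -top.
Qed.

Lemma rat_eval_fpair (P Q : {poly C}) s : (P != 0) || (Q != 0) ->
  exists pi ka : C, [/\ (pi != 0) || (ka != 0), rat_eval (P, Q) s = ratio pi ka &
    forall N, rat_eval (fpair P Q N) s = ratio (fpair pi ka N).1 (fpair pi ka N).2].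
Proof. by case: s => [x|]; [exact: rat_eval_fpair_some | exact: rat_eval_fpair_none]. Qed.

End RationalEvaluation.

Section Curve.
Variable R : rcfType.
Local Notation C := R[i].
Local Open Scope complex_scope.

Definition curve_den (a v : R) : C := (1 +i* v) ^+ 2 - a%:C.

Lemma curve_den_eq0 (a v : R) : curve_den a v = 0 -> a = 1.
Proof.
case=> hre him; have v0 : v = 0 by lra.
rewrite v0 in hre; lra.
Qed.

(* For s = j w, a^2 s^2 / ((1 - a) s^2 + 2 s + 1) = a^2 / ((1 + 1/s)^2 - a),
   and 1 + 1/(j w) = 1 +i* (- 1/w). *)
Lemma fcurveP (a : R) om : 0 < a ->
  fcurve a om = Some 0 \/ exists v, fcurve a om = ratio (a ^+ 2)%:C (curve_den a v).
Proof.
move=> a0; have a2 : (a ^+ 2)%:C != 0 :> C by rewrite eq_complex /= negb_and sqrf_eq0 gt_eqF.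
case: om => [w|]; last first.
  right; exists 0; rewrite /fcurve (@rat_eval_none_coef _ _ _ 2).
  - rewrite !coefD !coefZ coefXn coefX coef1 /= mulr1 mulr0 !addr0; congr ratio.
    by apply/eqP; rewrite eq_complex /=; apply/andP; split; apply/eqP; ring.
  - by rewrite (leq_trans (size_scale_leq _ _)) // size_polyXn.
  - rewrite (leq_trans (size_polyD _ _)) // geq_max size_poly1 andbT.
    rewrite (leq_trans (size_polyD _ _)) // geq_max.
    by rewrite !(leq_trans (size_scale_leq _ _)) // ?size_polyXn ?size_polyX.
  - by rewrite coefZ coefXn mulr1 a2.
rewrite /fcurve; set x := w%:C * 'i.
have [w0|w0] := eqVneq w 0.
  left; have -> : x = 0 by rewrite /x w0 mul0r.
  by rewrite rat_eval_some_horner; rewrite !hornerE /= !mulr0 add0r ?oner_eq0 ?orbT // /ratio oner_eq0 mul0r.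
right; exists (- w^-1).
have x0 : x != 0 by rewrite mulf_neq0 ?neq0Ci // eq_complex /= negb_and w0.
have hN : ((a ^+ 2)%:C *: 'X^2 : {poly C}).[x] = (a ^+ 2)%:C * x ^+ 2 by rewrite !hornerE.
have hD : ((1 - a)%:C *: 'X^2 + 2%:R *: 'X + 1 : {poly C}).[x] = x ^+ 2 * curve_den a (- w^-1).
  rewrite !hornerE; apply/eqP; rewrite eq_complex /=; by apply/andP; split; apply/eqP; field; exact: w0.
have Nx0 : (a ^+ 2)%:C * x ^+ 2 != 0 by rewrite mulf_neq0 // expf_neq0.
rewrite rat_eval_some_horner hN ?Nx0 //; apply: ratio_cross; rewrite ?Nx0 ?a2 //.
by rewrite hD; ring.
Qed.

End Curve.

Section DiskInvariance.
Variable R : rcfType.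
Local Notation C := R[i].
Local Open Scope complex_scope.

Definition sqnormc (c : C) : R := complex.Re c ^+ 2 + complex.Im c ^+ 2.

Lemma sqnormc_ge0 (c : C) : 0 <= sqnormc c.
Proof. by rewrite addr_ge0 ?sqr_ge0. Qed.

Lemma sqnormc_gt0 (c : C) : c != 0 -> 0 < sqnormc c.
Proof.
case: c => x y; rewrite eq_complex negb_and /sqnormc /= => /orP[] nz.
  by rewrite ltr_pwDl ?sqr_ge0 // exprn_even_gt0.
by rewrite ltr_pwDr ?sqr_ge0 // exprn_even_gt0.
Qed.

(* For d != 0, [disk_form a v n d <= 0] iff n/d lies in the closed disk with
   diameter [0, a (1 -i* v) / |1 +i* v|]. *)
Definition disk_form (a v : R) (n d : C) : R :=
  Num.sqrt (1 + v ^+ 2) * sqnormc n - a * complex.Re ((1 +i* v) * n * d^*).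

Lemma disk_formZ (a v : R) (c n d : C) :
  disk_form a v (c * n) (c * d) = sqnormc c * disk_form a v n d.
Proof. by case: c n d => [? ?] [? ?] [? ?]; rewrite /disk_form /sqnormc /=; ring. Qed.

Variables a v : R.
Hypothesis a_gt0 : 0 < a.
Let r := Num.sqrt (1 + v ^+ 2).
Let D0 := curve_den a v.

Lemma disk_form_step (n d : C) : let X := D0 * n + (a ^+ 2)%:C * d in
  disk_form a v X (X + D0 * d) = sqnormc D0 * disk_form a v n d
    - (a * sqnormc (X - (r * a)%:C * d) + a ^+ 4 * (r - 1) * sqnormc d).
Proof.
have r2 : r ^+ 2 = 1 + v ^+ 2 by rewrite sqr_sqrtr // addr_ge0 ?sqr_ge0.
(* The identity is polynomial modulo r^2 = 1 + v^2. *)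
move=> X; apply/eqP; rewrite -subr_eq0; apply/eqP.
transitivity (a ^+ 3 * sqnormc d * (r ^+ 2 - (1 + v ^+ 2))); last by rewrite r2 subrr mulr0.
rewrite {}/X /D0 /disk_form -/r.
by case: n d => [? ?] [? ?]; rewrite /sqnormc /=; ring.
Qed.

Lemma disk_form_fstep (pi ka n d : C) : D0 != 0 -> pi * D0 = (a ^+ 2)%:C * ka ->
  disk_form a v n d <= 0 -> disk_form a v (fstep pi ka (n, d)).1 (fstep pi ka (n, d)).2 <= 0.
Proof.
move=> D0n0 hpi hnd; rewrite /fstep /=.
set X := D0 * n + (a ^+ 2)%:C * d.
have e1 : D0 * (n * ka + pi * d) = ka * X.
  have -> : D0 * (n * ka + pi * d) = ka * (D0 * n) + pi * D0 * d by ring.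
  by rewrite hpi /X; ring.
have e2 : D0 * (n * ka + pi * d + d * ka) = ka * (X + D0 * d) by rewrite mulrDr e1; ring.
have r1 : 1 <= r by rewrite -sqrtr1 ler_wsqrtr // lerDl sqr_ge0.
rewrite -(pmulr_rle0 _ (sqnormc_gt0 D0n0)) -disk_formZ e1 e2 disk_formZ disk_form_step.
apply: mulr_ge0_le0; first exact: sqnormc_ge0.
rewrite subr_le0; apply: le_trans (mulr_ge0_le0 (sqnormc_ge0 _) hnd) _.
by rewrite addr_ge0 ?mulr_ge0 ?sqnormc_ge0 ?exprn_ge0 ?subr_ge0 ?r1 ?ltW.
Qed.

Lemma disk_form1_le0_norm (q : C) : disk_form a v q 1 <= 0 -> ComplexField.Normc.normc q <= a.
Proof.
have r2 : r ^+ 2 = 1 + v ^+ 2 by rewrite sqr_sqrtr // addr_ge0 ?sqr_ge0.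
have r1 : 1 <= r by rewrite -sqrtr1 ler_wsqrtr // lerDl sqr_ge0.
case: q => x y; rewrite /disk_form /sqnormc /= -/r => hJ.
set s := x ^+ 2 + y ^+ 2; set L := x - v * y.
have {hJ} hJ : r * s <= a * L.
  by move: hJ; rewrite !(mul1r, mulr1, oppr0, mulr0, subr0) subr_le0.
have CS : L ^+ 2 <= r ^+ 2 * s.
  by rewrite r2 -subr_ge0 (_ : _ - _ = (v * x + y) ^+ 2) ?sqr_ge0 // /L /s; ring.
have sa : s <= a ^+ 2.
  have [->|s_neq0] := eqVneq s 0; first exact: sqr_ge0.
  have s_gt0 : 0 < s by rewrite lt_def s_neq0 addr_ge0 ?sqr_ge0.
  have r_gt0 : 0 < r by apply: lt_le_trans r1.
  have rs_ge0 : 0 <= r * s by rewrite mulr_ge0 ?ltW.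
  have h1 : (r * s) ^+ 2 <= (a * L) ^+ 2 by nra.
  have h2 : (a * L) ^+ 2 <= a ^+ 2 * (r ^+ 2 * s) by nra.
  have r2s_gt0 : 0 < r ^+ 2 * s by rewrite mulr_gt0 ?exprn_gt0.
  by rewrite -(ler_pM2l r2s_gt0); nra.
by rewrite -(ger0_norm (ltW a_gt0)) -sqrtr_sqr ler_wsqrtr.
Qed.

Lemma disk_form_le0_norm (n d : C) : disk_form a v n d <= 0 -> (n != 0) || (d != 0) ->
  extC_norm_le (ratio n d) a.
Proof.
have r_gt0 : 0 < r by rewrite sqrtr_gt0 ltr_pwDl ?sqr_ge0.
have [-> hn0|d0 hnd _] := eqVneq d 0.
  rewrite orbF => n0; move: hn0; have -> : disk_form a v n 0 = r * sqnormc n.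
    by case: n n0 => x y _; rewrite /disk_form /sqnormc /= -/r; ring.
  by rewrite leNgt pmulr_rgt0 // sqnormc_gt0.
rewrite /ratio d0 /=; apply: disk_form1_le0_norm.
by rewrite -(pmulr_rle0 _ (sqnormc_gt0 d0)) -disk_formZ mulr1 mulrC divfK.
Qed.

Lemma fpair_disk_norm_le (pi ka : C) N : ka != 0 -> D0 != 0 -> pi * D0 = (a ^+ 2)%:C * ka ->
  extC_norm_le (ratio (fpair pi ka N).1 (fpair pi ka N).2) a.
Proof.
move=> ka0 D0n0 hpi; apply: disk_form_le0_norm; last by rewrite fpair_neq0 ?ka0 ?orbT.
elim: N => [|N]; first by rewrite (_ : disk_form a v 0 1 = 0) // /disk_form /sqnormc /=; ring.
by rewrite /=; case: (fpair pi ka N) => n d; exact: disk_form_fstep.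
Qed.

End DiskInvariance.

Section Bound.
Variable R : rcfType.
Local Notation C := R[i].

Lemma ratio_eq_cross (pi ka al be : C) : ka != 0 -> ratio pi ka = ratio al be ->
  be != 0 /\ pi * be = al * ka.
Proof.
rewrite /ratio => ka0; rewrite ka0; have [//|be0 [e]] := eqVneq be 0.
by split=> //; apply/eqP; rewrite -eqr_div // e.
Qed.

Lemma ratio_norm_le (al be : C) (a : R) :
  be != 0 -> ComplexField.Normc.normc (al / be) <= a -> extC_norm_le (ratio al be) a.
Proof. by rewrite /ratio => ->. Qed.

Lemma fpair_norm_le (pi ka : C) N (a : R) : (pi != 0) || (ka != 0) ->
  f_feasible (ratio pi ka) a -> extC_norm_le (ratio (fpair pi ka N).1 (fpair pi ka N).2) a.
Proof.
move=> nz [a0 [om hom]]; case: (fcurveP om a0); rewrite -hom.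
  rewrite /ratio; have [//|ka0 [/eqP]] := eqVneq ka 0.
  rewrite mulf_eq0 invr_eq0 (negbTE ka0) orbF => /eqP ->.
  rewrite fpair0l; apply: ratio_norm_le; first exact: expf_neq0.
  by rewrite mul0r ComplexField.Normc.normc0 ltW.
move=> [v hv]; have [ka0|ka0] := eqVneq ka 0.
  have a1 : a = 1.
    apply: (@curve_den_eq0 _ _ v); apply/eqP; apply: contraT => D0n0.
    by move: hv; rewrite ka0 /ratio eqxx D0n0.
  move: nz; rewrite ka0 eqxx orbF a1 => pi0.
  case: N => [|N]; apply: ratio_norm_le; rewrite ?fpair0r ?oner_eq0 ?expf_neq0 //.
    by rewrite mul0r ComplexField.Normc.normc0.
  by rewrite divff ?expf_neq0 // ComplexField.Normc.normc1.
have [D0n0 hpi] := ratio_eq_cross ka0 hv.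
exact: (fpair_disk_norm_le a0 N ka0 D0n0 hpi).
Qed.

End Bound.

Theorem corollary1 (R : rcfType) (p q : {poly R}) (s : extC R) :
  q != 0 ->
  ~ in_m4_0 (rat_eval (cpoly p, cpoly q) s) ->
  forall (N : nat) (a : R),
    f_feasible (rat_eval (cpoly p, cpoly q) s) a ->
    extC_norm_le (rat_eval (Fseq p q N) s) a.
Proof.
move=> q0 _ N a.
have -> : Fseq p q N = fpair (cpoly p) (cpoly q) N by elim: N => //= N ->.
have nz : (cpoly p != 0) || (cpoly q != 0) by rewrite /cpoly !map_poly_eq0 q0 orbT.
have [pi [ka [nzpk -> ->]]] := rat_eval_fpair s nz.
exact: fpair_norm_le.
Qed.
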